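(* Let $U:\mathbb{R}_1\to\mathbb{R}_1$ be as defined in the context, let $a\in\mathbb{N}_1$ and $l\in\mathbb{N}_1$ with $U^l(a)=a$. Then for every $x\in\mathbb{R}_1$ the following are equivalent: (i) the parity sequence $\mathcal{P}_U(x)=(\lfloor U^i(x)\rfloor \bmod 2)_{i\ge 0}$ is eventually periodic with period $s=(a\bmod 2,\,U(a)\bmod 2,\dots,U^{l-1}(a)\bmod 2)$, i.e. there is $j\in\mathbb{N}_0$ such that $(\lfloor U^{i}(x)\rfloor\bmod 2,\dots,\lfloor U^{i+l-1}(x)\rfloor\bmod 2)=s$ for all $i=j+ml$, $m\in\mathbb{N}_0$; (ii) $\mathcal{T}_U(x)$ tends to $\{U^t(a)\}$ from above, i.e. there is $j_0\in\mathbb{N}_0$ such that for every $j\in\{0,1,\dots,l-1\}$ the sequence $\big(U^{kl}(U^{j+j_0}(x))\big)_{k\ge 0}$ converges to $U^j(a)$ as $k\to\infty$ and all of its terms are $\ge U^j(a)$.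
   Context: $\mathbb{R}_1=\{x\in\mathbb{R}:x\ge1\}$, $\mathbb{N}_1=\{1,2,\dots\}$, $\mathbb{N}_0=\{0,1,2,\dots\}$, $\lfloor x\rfloor$ is the floor of $x$. $U:\mathbb{R}_1\to\mathbb{R}_1$ is given by $U(x)=x/2$ if $\lfloor x\rfloor$ is even and $U(x)=(3x+1)/2$ if $\lfloor x\rfloor$ is odd; $U^i$ denotes the $i$-th iterate ($U^0=\mathrm{id}$), and $\mathcal{T}_U(x)=(U^i(x))_{i\ge0}$ is the trajectory of $x$. *)

From Stdlib Require Import Reals ZArith Arith.
Open Scope R_scope.

(* floor of x: Stdlib's Int_part x = up x - 1 is the floor. *)
Definition floor (x : R) : Z := Int_part x.

(* U(x) = x/2 if floor x is even, (3x+1)/2 if floor x is odd.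
   Defined on all of R; only used on R_1 = [1, +oo). *)
Definition U (x : R) : R :=
  if Z.even (floor x) then x / 2 else (3 * x + 1) / 2.

Fixpoint Uiter (i : nat) (x : R) : R :=
  match i with
  | O => x
  | S i' => U (Uiter i' x)
  end.

Definition parity (y : R) : Z := Z.modulo (floor y) 2.

(* Inside a parity class, U is affine with slope 1/2 (even floor) or 3/2 (odd
   floor).  Hence if the orbit of y has the same parity sequence as the cycle
   point a, then U^t y - U^t a = P_t (y - a) where P_t is the product of the
   slopes along the cycle; over one period the product is an odd number over
   2^l, so it is not 1, and U^l a = a >= P_l a forces P_l < 1.  Thus the
   orbit of y converges geometrically to the cycle, and it does so from above:
   approaching an integer from below would give it the parity of a - 1.
   Conversely, converging from above to the integer points U^j a eventually
   makes the floors equal to U^j a, hence the parities agree. *)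

From Pilot Require Import Defs.
From Stdlib Require Import Reals ZArith Arith Lia Lra.
Open Scope R_scope.

Lemma Uiter_add n p x : Uiter (n + p) x = Uiter n (Uiter p x).
Proof. induction n as [|n IH]; simpl; [reflexivity | now rewrite IH]. Qed.

Lemma Uiter_comm n p x : Uiter n (Uiter p x) = Uiter p (Uiter n x).
Proof. now rewrite <- !Uiter_add, Nat.add_comm. Qed.

Lemma Uiter_mul_period l c : Uiter l c = c -> forall k, Uiter (k * l) c = c.
Proof.
  intros hper k; induction k as [|k IH]; simpl; [reflexivity|].
  now rewrite Uiter_add, IH.
Qed.

(* Qualified because [Lra] brings an unrelated [floor : positive -> Z] into scope. *)
Lemma floor_eq (n : Z) (z : R) : IZR n <= z < IZR n + 1 -> Defs.floor z = n.
Proof. intros hz; symmetry; apply Int_part_spec; lra. Qed.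

Lemma floor_IZR (n : Z) : Defs.floor (IZR n) = n.
Proof. apply floor_eq; lra. Qed.

Lemma U_IZR (n : Z) : exists m, U (IZR n) = IZR m.
Proof.
  unfold U; rewrite floor_IZR.
  destruct (Z.even n) eqn:E.
  - apply Z.even_spec in E as [m ->]. exists m. rewrite mult_IZR; lra.
  - assert (Z.odd n = true) as [m ->]%Z.odd_spec
      by (rewrite <- Z.negb_even, E; reflexivity).
    exists (3 * m + 2)%Z. rewrite !plus_IZR, !mult_IZR; lra.
Qed.

Lemma Uiter_IZR t (n : Z) : exists m, Uiter t (IZR n) = IZR m.
Proof.
  induction t as [|t [m IH]]; simpl; [now exists n|].
  rewrite IH; apply U_IZR.
Qed.

Lemma parity_pred_IZR_neq (n : Z) (z : R) :
  IZR n - 1 <= z < IZR n -> parity z <> parity (IZR n).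
Proof.
  intros hz; unfold parity.
  rewrite floor_IZR, (floor_eq (n - 1)) by (rewrite minus_IZR; lra).
  Z.div_mod_to_equations; lia.
Qed.

Lemma parity_eventually_of_cv_above (u : nat -> R) (n : Z) :
  Un_cv u (IZR n) -> (forall k, IZR n <= u k) ->
  exists N, forall k, (N <= k)%nat -> parity (u k) = parity (IZR n).
Proof.
  intros hcv hge; destruct (hcv 1 Rlt_0_1) as [N HN].
  exists N; intros k hk; specialize (HN k hk); specialize (hge k).
  unfold R_dist in HN; rewrite Rabs_right in HN by lra.
  unfold parity; rewrite floor_IZR, (floor_eq n) by lra; reflexivity.
Qed.

Definition slope (c : R) : R := if Z.even (Defs.floor c) then / 2 else 3 / 2.

Fixpoint slope_prod (c : R) (t : nat) : R :=
  match t with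
  | O => 1
  | S t' => slope (Uiter t' c) * slope_prod c t'
  end.

Definition same_parities (y c : R) : Prop :=
  forall i, parity (Uiter i y) = parity (Uiter i c).

Lemma slope_pos c : 0 < slope c.
Proof. unfold slope; destruct (Z.even _); lra. Qed.

Lemma slope_prod_pos c t : 0 < slope_prod c t.
Proof.
  induction t as [|t IH]; simpl; [lra|].
  pose proof (slope_pos (Uiter t c)); nra.
Qed.

Lemma U_sub_same_parity y c :
  parity y = parity c -> U y - U c = slope c * (y - c).
Proof.
  unfold parity, U, slope; intros hp.
  replace (Z.even (Defs.floor y)) with (Z.even (Defs.floor c)) by now rewrite !Zeven_mod, hp.
  destruct (Z.even (Defs.floor c)); field.
Qed.

Lemma Uiter_sub_same_parities y c t :
  same_parities y c -> Uiter t y - Uiter t c = slope_prod c t * (y - c).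
Proof.
  intros hp; induction t as [|t IH]; simpl; [ring|].
  rewrite U_sub_same_parity, IH by apply hp; ring.
Qed.

Lemma Uiter_ge_slope_prod c t : slope_prod c t * c <= Uiter t c.
Proof.
  induction t as [|t IH]; simpl; [lra|].
  pose proof (slope_pos (Uiter t c)).
  assert (slope (Uiter t c) * Uiter t c <= U (Uiter t c))
    by (unfold U, slope; destruct (Z.even _); lra).
  nra.
Qed.

(* The numerator 3^(number of odd steps) is odd. *)
Lemma slope_prod_odd_numerator c t :
  exists k, slope_prod c t * 2 ^ t = IZR k /\ Z.odd k = true.
Proof.
  induction t as [|t [k [Hk Hodd]]]; simpl; [now exists 1%Z; split; [lra|]|].
  unfold slope; destruct (Z.even _).
  - exists k; split; [rewrite <- Hk; field | exact Hodd].
  - exists (3 * k)%Z; split; [rewrite mult_IZR, <- Hk; field |].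
    now rewrite Z.odd_mul, Hodd.
Qed.

Lemma slope_prod_neq_1 c t : (1 <= t)%nat -> slope_prod c t <> 1.
Proof.
  intros ht E; destruct (slope_prod_odd_numerator c t) as [k [Hk Hodd]].
  rewrite E, Rmult_1_l in Hk.
  change 2 with (IZR 2) in Hk; rewrite pow_IZR in Hk; apply eq_IZR in Hk; subst k.
  rewrite Z.odd_pow in Hodd by lia; discriminate.
Qed.

Lemma cv_affine_geometric c C lam :
  Rabs lam < 1 -> Un_cv (fun k => c + C * lam ^ k) c.
Proof.
  intros hlam.
  assert (hpow : Un_cv (pow lam) 0).
  { intros eps heps; destruct (pow_lt_1_zero lam hlam eps heps) as [N HN].
    exists N; intros k hk; unfold R_dist; rewrite Rminus_0_r; now apply HN. }
  assert (hconst : forall r, Un_cv (fun _ => r) r)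
    by (intros r eps heps; exists O; intros; unfold R_dist; rewrite Rminus_diag, Rabs_R0; lra).
  pose proof (CV_plus _ _ _ _ (hconst c) (CV_mult _ _ _ _ (hconst C) hpow)) as hcv.
  now rewrite Rmult_0_r, Rplus_0_r in hcv.
Qed.

Section Cycle.

Variables (c : R) (l : nat).
Hypothesis hper : Uiter l c = c.

Lemma same_parities_Uiter_period y k :
  same_parities y c -> same_parities (Uiter (k * l) y) c.
Proof.
  intros hp i.
  now rewrite <- Uiter_add, hp, Uiter_add, (Uiter_mul_period l c hper).
Qed.

Lemma Uiter_period_sub y k :
  same_parities y c -> Uiter (k * l) y - c = slope_prod c l ^ k * (y - c).
Proof.
  intros hp; induction k as [|k IH]; simpl; [ring|].
  rewrite Uiter_add.
  pose proof (Uiter_sub_same_parities _ _ l (same_parities_Uiter_period y k hp)) as E.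
  rewrite hper in E; rewrite E, IH; ring.
Qed.

Lemma Uiter_period_shift_sub y j k :
  same_parities y c ->
  Uiter (k * l) (Uiter j y) - Uiter j c
  = slope_prod c j * slope_prod c l ^ k * (y - c).
Proof.
  intros hp.
  rewrite Uiter_comm, Uiter_sub_same_parities by now apply same_parities_Uiter_period.
  rewrite Uiter_period_sub by exact hp; ring.
Qed.

Lemma same_parities_cv_above y j :
  0 < slope_prod c l < 1 -> c <= y -> same_parities y c ->
  Un_cv (fun k => Uiter (k * l) (Uiter j y)) (Uiter j c)
  /\ forall k, Uiter j c <= Uiter (k * l) (Uiter j y).
Proof.
  intros hlam hy hp.
  assert (E : forall k, Uiter (k * l) (Uiter j y)
              = Uiter j c + slope_prod c j * (y - c) * slope_prod c l ^ k).
  { intros k; pose proof (Uiter_period_shift_sub y j k hp); lra. }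
  split.
  - eapply Un_cv_ext; [intros k; symmetry; apply E |].
    apply cv_affine_geometric; rewrite Rabs_right; lra.
  - intros k; rewrite E.
    pose proof (slope_prod_pos c j); pose proof (pow_lt _ k (proj1 hlam)).
    assert (0 <= slope_prod c j * (y - c) * slope_prod c l ^ k)
      by (apply Rmult_le_pos; [apply Rmult_le_pos|]; lra).
    lra.
Qed.

End Cycle.

Section IntegerCycle.

Variables (n : Z) (l : nat).
Hypotheses (hn : (1 <= n)%Z) (hl : (1 <= l)%nat) (hper : Uiter l (IZR n) = IZR n).

Lemma cycle_slope_prod_bounds : 0 < slope_prod (IZR n) l < 1.
Proof.
  pose proof (slope_prod_pos (IZR n) l).
  pose proof (Uiter_ge_slope_prod (IZR n) l) as hge; rewrite hper in hge.
  pose proof (slope_prod_neq_1 (IZR n) l hl).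
  assert (1 <= IZR n) by (apply IZR_le; exact hn).
  nra.
Qed.

Lemma same_parities_cycle_ge y : same_parities y (IZR n) -> IZR n <= y.
Proof.
  intros hp; destruct (Rle_or_lt (IZR n) y) as [|hy]; [assumption|exfalso].
  pose proof cycle_slope_prod_bounds as hlam.
  destruct (cv_affine_geometric (IZR n) (y - IZR n) (slope_prod (IZR n) l)
              ltac:(rewrite Rabs_right; lra) 1 Rlt_0_1) as [N HN].
  specialize (HN N (le_n N)); unfold R_dist in HN.
  pose proof (Uiter_period_sub _ _ hper y N hp) as E.
  pose proof (pow_lt _ N (proj1 hlam)).
  assert (slope_prod (IZR n) l ^ N * (y - IZR n) < 0) by (apply Rmult_pos_neg; lra).
  rewrite Rabs_left in HN by lra.
  apply (parity_pred_IZR_neq n (Uiter (N * l) y)); [lra|].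
  apply (same_parities_Uiter_period _ _ hper y N hp 0%nat).
Qed.

End IntegerCycle.

Lemma same_parities_of_periodic_parities (c x : R) (l j : nat) :
  (1 <= l)%nat -> Uiter l c = c ->
  (forall m r, (r < l)%nat -> parity (Uiter (j + m * l + r) x) = parity (Uiter r c)) ->
  same_parities (Uiter j x) c.
Proof.
  intros hl hper hp i.
  rewrite (Nat.div_mod_eq i l).
  replace (l * (i / l) + i mod l)%nat with (i mod l + i / l * l)%nat by ring.
  rewrite !Uiter_add, (Uiter_mul_period l c hper), <- !Uiter_add.
  replace (i mod l + i / l * l + j)%nat with (j + i / l * l + i mod l)%nat by ring.
  apply hp, Nat.mod_upper_bound; lia.
Qed.

Lemma eventually_forall_lt (P : nat -> nat -> Prop) (l : nat) :
  (forall j, (j < l)%nat -> exists K, forall k, (K <= k)%nat -> P j k) ->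
  exists K, forall j, (j < l)%nat -> forall k, (K <= k)%nat -> P j k.
Proof.
  induction l as [|l IH]; intros H; [now exists O; intros; lia|].
  destruct IH as [K1 HK1]; [intros; apply H; lia|].
  destruct (H l) as [K2 HK2]; [lia|].
  exists (Nat.max K1 K2); intros j hj k hk.
  destruct (Nat.eq_dec j l) as [->|]; [apply HK2 | apply HK1]; lia.
Qed.

Theorem proposition1 (a l : nat) (ha : (1 <= a)%nat) (hl : (1 <= l)%nat)
  (hper : Uiter l (INR a) = INR a) (x : R) (hx : 1 <= x) :
  (exists j : nat, forall m r : nat, (r < l)%nat ->
      parity (Uiter (j + m * l + r) x) = parity (Uiter r (INR a)))
  <->
  (exists j0 : nat, forall j : nat, (j < l)%nat ->
      Un_cv (fun k : nat => Uiter (k * l) (Uiter (j + j0) x)) (Uiter j (INR a))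
      /\ (forall k : nat, Uiter j (INR a) <= Uiter (k * l) (Uiter (j + j0) x))).
Proof.
  rewrite INR_IZR_INZ in *; set (n := Z.of_nat a) in *.
  assert (hn : (1 <= n)%Z) by lia.
  split.
  - intros [j hpar].
    pose proof (same_parities_of_periodic_parities _ _ _ _ hl hper hpar) as hp.
    exists j; intros j' _; rewrite Uiter_add.
    apply same_parities_cv_above; trivial.
    + now apply cycle_slope_prod_bounds.
    + now apply (same_parities_cycle_ge n l).
  - intros [j0 hcv].
    destruct (eventually_forall_lt
                (fun j k => parity (Uiter (k * l) (Uiter (j + j0) x))
                            = parity (Uiter j (IZR n))) l) as [K HK].
    { intros j hj; destruct (hcv j hj) as [hc hge], (Uiter_IZR j n) as [m Hm].
      rewrite Hm in hc, hge |- *; now apply parity_eventually_of_cv_above. }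
    exists (j0 + K * l)%nat; intros m r hr.
    replace (j0 + K * l + m * l + r)%nat with ((K + m) * l + (r + j0))%nat by nia.
    rewrite Uiter_add; apply HK; [exact hr | lia].
Qed.
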